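(* (i) Let $L$ be a lattice, let $\gamma$ be a congruence relation of $L$, and let $K=L/\gamma$ be the quotient lattice, with canonical surjection $u\mapsto [u]_\gamma$. For every congruence relation $\alpha$ of $L$, the relation \[ \alpha/\gamma=\bigl\{([u]_\gamma,[v]_\gamma) \mid u,v\in L,\ (u,v)\in\alpha\bigr\} \] is a tolerance relation of $K$. (ii) Conversely, for every lattice $K$ and every tolerance relation $\tau$ of $K$, there exist a lattice $L$, congruence relations $\alpha$ and $\gamma$ of $L$, and a lattice isomorphism $\varphi\colon L/\gamma\to K$ such that \[ \tau=\varphi(\alpha/\gamma)=\bigl\{(\varphi(X),\varphi(Y)) \mid (X,Y)\in\alpha/\gamma\bigr\}. \]
   Context: A tolerance relation of a lattice $L$ is a binary relation $\rho\subseteq L\times L$ that is reflexive, symmetric, and has the Substitution Properties: if $(a,b)\in\rho$ and $(c,d)\in\rho$ then $(a\vee c,b\vee d)\in\rho$ and $(a\wedge c,b\wedge d)\in\rho$. A congruence relation is a transitive tolerance. $[u]_\gamma$ denotes the $\gamma$-class of $u$. *)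

From Stdlib Require Import ClassicalEpsilon FunctionalExtensionality
  PropExtensionality ProofIrrelevance.



Record lattice := Lattice {
  car :> Type;
  join : car -> car -> car;
  meet : car -> car -> car;
  joinC : forall x y, join x y = join y x;
  joinA : forall x y z, join x (join y z) = join (join x y) z;
  meetC : forall x y, meet x y = meet y x;
  meetA : forall x y z, meet x (meet y z) = meet (meet x y) z;
  join_meet : forall x y, join x (meet x y) = x;
  meet_join : forall x y, meet x (join x y) = x
}.

Arguments join {l} _ _.
Arguments meet {l} _ _.

Definition relation (L : lattice) := L -> L -> Prop.
Arguments relation : clear implicits.

Definition tolerance (L : lattice) (rho : relation L) : Prop :=
  (forall a, rho a a) /\
  (forall a b, rho a b -> rho b a) /\
  (forall a b c d, rho a b -> rho c d ->
      rho (join a c) (join b d) /\ rho (meet a c) (meet b d)).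

Definition congruence (L : lattice) (rho : relation L) : Prop :=
  tolerance L rho /\ (forall a b c, rho a b -> rho b c -> rho a c).

Definition lattice_hom (L K : lattice) (f : L -> K) : Prop :=
  (forall x y, f (join x y) = join (f x) (f y)) /\
  (forall x y, f (meet x y) = meet (f x) (f y)).

Definition lattice_iso (L K : lattice) (f : L -> K) : Prop :=
  lattice_hom L K f /\ (forall x y, f x = f y -> x = y) /\
  (forall y, exists x, f x = y).

Section Quotient.
Variables (L : lattice) (g : relation L) (Hg : congruence L g).

Definition qcar := { X : L -> Prop | exists u, X = g u }.

Definition qclass (u : L) : qcar := exist _ (g u) (ex_intro _ u eq_refl).

Definition qrep (X : qcar) : L :=
  proj1_sig (constructive_indefinite_description _ (proj2_sig X)).

Lemma qrep_spec X : proj1_sig X = g (qrep X).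
Proof.
unfold qrep; destruct (constructive_indefinite_description _ _); auto.
Qed.

Lemma qclass_rep X : qclass (qrep X) = X.
Proof.
assert (E := qrep_spec X).
unfold qclass; revert E; generalize (qrep X); intros u E.
destruct X as [X HX]; simpl in E; subst X.
f_equal; apply proof_irrelevance.
Qed.

Lemma qclass_eq u v : g u v -> qclass u = qclass v.
Proof.
destruct Hg as [[Hr [Hs _]] Ht]; intros H.
assert (E : g u = g v).
{ apply functional_extensionality; intro w; apply propositional_extensionality;
  split; intro H'; eauto. }
unfold qclass; revert E; generalize (ex_intro (fun w => g u = g w) u eq_refl).
intros p E; revert p; rewrite E; intros p; f_equal; apply proof_irrelevance.
Qed.

Lemma qclass_eq_inv u v : qclass u = qclass v -> g u v.
Proof.
destruct Hg as [[Hr [Hs _]] Ht]; intros H.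
assert (E : g u = g v) by (apply (f_equal (@proj1_sig _ _)) in H; exact H).
apply Hs; rewrite <- E; apply Hr.
Qed.

Definition qjoin (X Y : qcar) : qcar := qclass (join (qrep X) (qrep Y)).
Definition qmeet (X Y : qcar) : qcar := qclass (meet (qrep X) (qrep Y)).

Lemma qrep_class u : g (qrep (qclass u)) u.
Proof.
apply qclass_eq_inv; apply qclass_rep.
Qed.

Lemma qjoin_class u v : qjoin (qclass u) (qclass v) = qclass (join u v).
Proof.
destruct Hg as [[Hr [Hs Hc]] Ht]; apply qclass_eq.
apply Hc; apply qrep_class.
Qed.

Lemma qmeet_class u v : qmeet (qclass u) (qclass v) = qclass (meet u v).
Proof.
destruct Hg as [[Hr [Hs Hc]] Ht]; apply qclass_eq.
apply Hc; apply qrep_class.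
Qed.

Ltac qdestr X := rewrite <- (qclass_rep X); generalize (qrep X); clear X; intro X.

Lemma qjoinC X Y : qjoin X Y = qjoin Y X.
Proof. qdestr X; qdestr Y; rewrite !qjoin_class, joinC; auto. Qed.
Lemma qjoinA X Y Z : qjoin X (qjoin Y Z) = qjoin (qjoin X Y) Z.
Proof. qdestr X; qdestr Y; qdestr Z; rewrite !qjoin_class, joinA; auto. Qed.
Lemma qmeetC X Y : qmeet X Y = qmeet Y X.
Proof. qdestr X; qdestr Y; rewrite !qmeet_class, meetC; auto. Qed.
Lemma qmeetA X Y Z : qmeet X (qmeet Y Z) = qmeet (qmeet X Y) Z.
Proof. qdestr X; qdestr Y; qdestr Z; rewrite !qmeet_class, meetA; auto. Qed.
Lemma qjoin_meet X Y : qjoin X (qmeet X Y) = X.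
Proof. qdestr X; qdestr Y; rewrite qmeet_class, qjoin_class, join_meet; auto. Qed.
Lemma qmeet_join X Y : qmeet X (qjoin X Y) = X.
Proof. qdestr X; qdestr Y; rewrite qjoin_class, qmeet_class, meet_join; auto. Qed.

Definition quotient_lattice : lattice :=
  @Lattice qcar qjoin qmeet qjoinC qjoinA qmeetC qmeetA qjoin_meet qmeet_join.

Definition quot_rel (alpha : relation L) : relation quotient_lattice :=
  fun X Y => exists u v, alpha u v /\ X = qclass u /\ Y = qclass v.

End Quotient.

(* Part (i) only uses that alpha/gamma is the image of alpha under a lattice
   homomorphism, which preserves the Substitution Properties.  For part (ii)
   take L to be the lattice of triples (x, p, q) with p <= x <= q and
   (p, q) in tau, ordered componentwise.  Projecting to x is a surjective
   homomorphism onto K, so with gamma its kernel L/gamma is isomorphic to K;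
   alpha identifies triples with the same block [p, q].  A pair (x, y) then
   lies in the image of alpha iff x and y lie in a common block [p, q] with
   (p, q) in tau, and this is equivalent to (x, y) in tau: such a block is
   provided by [x /\ y, x \/ y], and conversely tolerances are convex. *)
From Stdlib Require Import ProofIrrelevance.

Section LatticeOrder.
Variable K : lattice.

Definition lat_le (x y : K) : Prop := meet x y = x.

Lemma meet_idem (x : K) : meet x x = x.
Proof. rewrite <- (join_meet K x x) at 2. apply meet_join. Qed.

Lemma join_idem (x : K) : join x x = x.
Proof. rewrite <- (meet_join K x x) at 2. apply join_meet. Qed.

Lemma lat_le_join (x y : K) : lat_le x y <-> join x y = y.
Proof.
  unfold lat_le; split; intro H; rewrite <- H.
  - rewrite joinC, meetC. apply join_meet.
  - apply meet_join.
Qed.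

Lemma lat_le_meet_l (x y : K) : lat_le (meet x y) x.
Proof. unfold lat_le. rewrite (meetC K (meet x y) x), meetA, meet_idem. reflexivity. Qed.

Lemma lat_le_meet_r (x y : K) : lat_le (meet x y) y.
Proof. unfold lat_le. rewrite <- meetA, meet_idem. reflexivity. Qed.

Lemma lat_le_join_l (x y : K) : lat_le x (join x y).
Proof. apply meet_join. Qed.

Lemma lat_le_join_r (x y : K) : lat_le y (join x y).
Proof. rewrite joinC. apply meet_join. Qed.

Lemma meet_le_compat (a b c d : K) :
  lat_le a b -> lat_le c d -> lat_le (meet a c) (meet b d).
Proof.
  unfold lat_le; intros Hab Hcd.
  rewrite <- (meetA K a c), (meetA K c b d), (meetC K c b), <- (meetA K b c d), Hcd.
  rewrite (meetA K a b c), Hab. reflexivity.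
Qed.

Lemma join_le_compat (a b c d : K) :
  lat_le a b -> lat_le c d -> lat_le (join a c) (join b d).
Proof.
  rewrite !lat_le_join; intros Hab Hcd.
  rewrite <- (joinA K a c), (joinA K c b d), (joinC K c b), <- (joinA K b c d), Hcd.
  rewrite (joinA K a b d), Hab. reflexivity.
Qed.

End LatticeOrder.

Arguments lat_le {K} _ _.

Section ToleranceFacts.
Variables (K : lattice) (tau : relation K) (Htau : tolerance K tau).

Lemma tolerance_refl x : tau x x.
Proof. destruct Htau as [H _]. auto. Qed.

Lemma tolerance_sym x y : tau x y -> tau y x.
Proof. destruct Htau as [_ [H _]]. auto. Qed.

Lemma tolerance_join a b c d : tau a b -> tau c d -> tau (join a c) (join b d).
Proof. destruct Htau as [_ [_ H]]. intros; apply H; auto. Qed.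

Lemma tolerance_meet a b c d : tau a b -> tau c d -> tau (meet a c) (meet b d).
Proof. destruct Htau as [_ [_ H]]. intros; apply H; auto. Qed.

Lemma tolerance_meet_join x y : tau x y -> tau (meet x y) (join x y).
Proof.
  intro Hxy.
  assert (Hlo := tolerance_meet _ _ _ _ Hxy (tolerance_refl y)).
  assert (Hhi := tolerance_meet _ _ _ _ (tolerance_sym _ _ Hxy) (tolerance_refl x)).
  rewrite meet_idem in Hlo, Hhi. rewrite (meetC K y x) in Hhi.
  assert (H := tolerance_join _ _ _ _ Hlo Hhi).
  rewrite join_idem, (joinC K y x) in H. exact H.
Qed.

(* Joining (x, x) and (y, y) with (p, q) gives (x, q) and (q, y); their meet is (x, y). *)
Lemma tolerance_convex p q x y :
  lat_le p x -> lat_le x q -> lat_le p y -> lat_le y q -> tau p q -> tau x y.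
Proof.
  intros Hpx Hxq Hpy Hyq Hpq.
  assert (Hxq' := tolerance_join _ _ _ _ (tolerance_refl x) Hpq).
  assert (Hqy := tolerance_join _ _ _ _ (tolerance_refl y) (tolerance_sym _ _ Hpq)).
  rewrite lat_le_join in Hpx, Hxq, Hpy, Hyq.
  rewrite (joinC K x p), Hpx, Hxq in Hxq'.
  rewrite (joinC K y p), Hpy, Hyq in Hqy.
  assert (H := tolerance_meet _ _ _ _ Hxq' Hqy).
  rewrite <- lat_le_join in Hxq, Hyq.
  rewrite Hxq, (meetC K q y), Hyq in H. exact H.
Qed.

End ToleranceFacts.

Lemma image_tolerance (L K : lattice) (f : L -> K) (alpha : relation K) (rho : relation L) :
  lattice_hom L K f -> tolerance L rho ->
  (forall X, exists u, X = f u) ->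
  (forall X Y, alpha X Y <-> exists u v, rho u v /\ X = f u /\ Y = f v) ->
  tolerance K alpha.
Proof.
  intros [Hj Hm] [Hr [Hs Hc]] Hsurj Halpha.
  split; [|split].
  - intro X. destruct (Hsurj X) as [u ->]. apply Halpha. exists u, u. auto.
  - intros X Y HXY. apply Halpha in HXY. destruct HXY as (u & v & H & -> & ->).
    apply Halpha. exists v, u. auto.
  - intros X Y Z W HXY HZW.
    apply Halpha in HXY. destruct HXY as (u & v & H & -> & ->).
    apply Halpha in HZW. destruct HZW as (u' & v' & H' & -> & ->).
    destruct (Hc _ _ _ _ H H') as [Hjoin Hmeet].
    split; apply Halpha; rewrite <- ?Hj, <- ?Hm; eauto 6.
Qed.

Lemma qclass_hom (L : lattice) (gamma : relation L) (Hgamma : congruence L gamma) :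
  lattice_hom L (quotient_lattice L gamma Hgamma) (qclass L gamma).
Proof.
  split; intros u v; symmetry.
  - apply (qjoin_class L gamma Hgamma).
  - apply (qmeet_class L gamma Hgamma).
Qed.

Lemma quot_rel_tolerance (L : lattice) (gamma : relation L) (Hgamma : congruence L gamma)
    (alpha : relation L) :
  tolerance L alpha -> tolerance _ (quot_rel L gamma Hgamma alpha).
Proof.
  intro Halpha.
  apply (image_tolerance L (quotient_lattice L gamma Hgamma) (qclass L gamma) _ alpha
           (qclass_hom L gamma Hgamma) Halpha).
  - intro X. exists (qrep L gamma X). symmetry. apply qclass_rep.
  - reflexivity.
Qed.

Lemma congruence_and (L : lattice) (rho sigma : relation L) :
  congruence L rho -> congruence L sigma ->
  congruence L (fun u v => rho u v /\ sigma u v).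
Proof.
  intros [[Hr [Hs Hc]] Ht] [[Hr' [Hs' Hc']] Ht'].
  split; [split; [|split]|].
  - auto.
  - intros a b [H H']; auto.
  - intros a b c d [H1 H1'] [H2 H2'].
    destruct (Hc _ _ _ _ H1 H2), (Hc' _ _ _ _ H1' H2'). auto.
  - intros a b c [H1 H1'] [H2 H2']. eauto.
Qed.

Section FirstIsomorphism.
Variables (L K : lattice) (f : L -> K) (Hf : lattice_hom L K f).

Definition kernel_rel : relation L := fun u v => f u = f v.

Lemma kernel_congruence : congruence L kernel_rel.
Proof.
  destruct Hf as [Hj Hm]; unfold kernel_rel.
  split; [split; [|split]|].
  - reflexivity.
  - auto.
  - intros a b c d Hab Hcd. rewrite !Hj, !Hm, Hab, Hcd. auto.
  - intros a b c Hab Hbc. congruence.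
Qed.

Definition quotient_map (X : quotient_lattice L kernel_rel kernel_congruence) : K :=
  f (qrep L kernel_rel X).

Lemma quotient_map_class u : quotient_map (qclass L kernel_rel u) = f u.
Proof. apply (qrep_class L kernel_rel kernel_congruence). Qed.

Lemma quotient_map_iso :
  (forall y, exists x, f x = y) -> lattice_iso _ K quotient_map.
Proof.
  intro Hsurj. destruct Hf as [Hj Hm].
  split; [split|split].
  - intros X Y. cbn. unfold qjoin. rewrite quotient_map_class. apply Hj.
  - intros X Y. cbn. unfold qmeet. rewrite quotient_map_class. apply Hm.
  - intros X Y HXY.
    rewrite <- (qclass_rep L kernel_rel X), <- (qclass_rep L kernel_rel Y).
    apply (qclass_eq L kernel_rel kernel_congruence). exact HXY.
  - intro y. destruct (Hsurj y) as [x <-].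
    exists (qclass L kernel_rel x). apply quotient_map_class.
Qed.

Lemma quotient_map_image (alpha : relation L) x y :
  (exists X Y, quot_rel L kernel_rel kernel_congruence alpha X Y /\
               x = quotient_map X /\ y = quotient_map Y) <->
  (exists u v, alpha u v /\ x = f u /\ y = f v).
Proof.
  split.
  - intros (X & Y & (u & v & Huv & -> & ->) & -> & ->).
    exists u, v. rewrite !quotient_map_class. auto.
  - intros (u & v & Huv & -> & ->).
    exists (qclass L kernel_rel u), (qclass L kernel_rel v).
    rewrite !quotient_map_class. split; [exists u, v|]; auto.
Qed.

End FirstIsomorphism.

Section BlockLattice.
Variables (K : lattice) (tau : relation K) (Htau : tolerance K tau).

Record block_point := BlockPoint {
  pt : K; lo : K; hi : K;
  lo_le_pt : lat_le lo pt; pt_le_hi : lat_le pt hi; tau_lo_hi : tau lo hi }.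

Lemma block_point_eq (a b : block_point) :
  pt a = pt b -> lo a = lo b -> hi a = hi b -> a = b.
Proof. destruct a, b; simpl; intros; subst. f_equal; apply proof_irrelevance. Qed.

Definition block_join (a b : block_point) : block_point :=
  BlockPoint (join (pt a) (pt b)) (join (lo a) (lo b)) (join (hi a) (hi b))
    (join_le_compat K _ _ _ _ (lo_le_pt a) (lo_le_pt b))
    (join_le_compat K _ _ _ _ (pt_le_hi a) (pt_le_hi b))
    (tolerance_join K tau Htau _ _ _ _ (tau_lo_hi a) (tau_lo_hi b)).

Definition block_meet (a b : block_point) : block_point :=
  BlockPoint (meet (pt a) (pt b)) (meet (lo a) (lo b)) (meet (hi a) (hi b))
    (meet_le_compat K _ _ _ _ (lo_le_pt a) (lo_le_pt b))
    (meet_le_compat K _ _ _ _ (pt_le_hi a) (pt_le_hi b))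
    (tolerance_meet K tau Htau _ _ _ _ (tau_lo_hi a) (tau_lo_hi b)).

Definition block_lattice : lattice.
Proof.
  refine (@Lattice block_point block_join block_meet _ _ _ _ _ _);
  intros; apply block_point_eq; simpl;
  first [apply joinC | apply joinA | apply meetC | apply meetA
        | apply join_meet | apply meet_join].
Defined.

Lemma pt_hom : lattice_hom block_lattice K pt.
Proof. split; reflexivity. Qed.

Lemma lo_hom : lattice_hom block_lattice K lo.
Proof. split; reflexivity. Qed.

Lemma hi_hom : lattice_hom block_lattice K hi.
Proof. split; reflexivity. Qed.

Definition same_block : relation block_lattice :=
  fun a b => @kernel_rel block_lattice K lo a b /\ @kernel_rel block_lattice K hi a b.

Lemma same_block_congruence : congruence block_lattice same_block.
Proof.
  apply congruence_and; apply kernel_congruence; [apply lo_hom | apply hi_hom].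
Qed.

Definition trivial_block (x : K) : block_point :=
  BlockPoint x x x (meet_idem K x) (meet_idem K x) (tolerance_refl K tau Htau x).

Definition hull_block_l x y (Hxy : tau x y) : block_point :=
  BlockPoint x (meet x y) (join x y) (lat_le_meet_l K x y) (lat_le_join_l K x y)
    (tolerance_meet_join K tau Htau x y Hxy).

Definition hull_block_r x y (Hxy : tau x y) : block_point :=
  BlockPoint y (meet x y) (join x y) (lat_le_meet_r K x y) (lat_le_join_r K x y)
    (tolerance_meet_join K tau Htau x y Hxy).

Lemma tolerance_same_block_image x y :
  tau x y <-> exists a b, same_block a b /\ x = pt a /\ y = pt b.
Proof.
  split.
  - intro Hxy. exists (hull_block_l x y Hxy), (hull_block_r x y Hxy).
    repeat split.
  - intros (a & b & [Hlo Hhi] & -> & ->).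
    apply (tolerance_convex K tau Htau (lo a) (hi a)).
    + apply lo_le_pt.
    + apply pt_le_hi.
    + rewrite Hlo. apply lo_le_pt.
    + rewrite Hhi. apply pt_le_hi.
    + apply tau_lo_hi.
Qed.

End BlockLattice.

Theorem theorem2 :
  (* (i) *)
  (forall (L : lattice) (gamma : relation L) (Hgamma : congruence L gamma)
          (alpha : relation L),
      congruence L alpha ->
      tolerance _ (quot_rel L gamma Hgamma alpha)) /\
  (* (ii) *)
  (forall (K : lattice) (tau : relation K),
      tolerance K tau ->
      exists (L : lattice) (alpha gamma : relation L)
             (Hgamma : congruence L gamma),
        congruence L alpha /\
        exists phi : quotient_lattice L gamma Hgamma -> K,
          lattice_iso _ K phi /\
          (forall x y : K,
             tau x y <->
             exists X Y, quot_rel L gamma Hgamma alpha X Y /\ x = phi X /\ y = phi Y)).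
Proof.
  split.
  - intros L gamma Hgamma alpha [Halpha _].
    apply quot_rel_tolerance; exact Halpha.
  - intros K tau Htau.
    set (L := block_lattice K tau Htau).
    exists L, (same_block K tau Htau), (@kernel_rel L K (pt K tau)),
      (kernel_congruence L K _ (pt_hom K tau Htau)).
    split; [apply same_block_congruence|].
    exists (quotient_map L K _ (pt_hom K tau Htau)).
    split.
    + apply quotient_map_iso.
      intro y. exists (trivial_block K tau Htau y). reflexivity.
    + intros x y. rewrite quotient_map_image.
      apply tolerance_same_block_image.
Qed.
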